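(* Let $\mathcal H$ be a hypothesis on a Borel set $\mathcal Z\subseteq\mathbb R^d$. An optimal e-class for $\mathcal H$ exists if and only if the set of all maximal e-variables for $\mathcal H$ is a majorising e-class. If an optimal e-class exists, it is unique, it coincides with the set of all maximal e-variables, and it is the only majorising e-class all of whose elements are maximal.
   Context: A hypothesis is a non-empty set $\mathcal H$ of Borel probability measures on $\mathcal Z$. An e-variable for $\mathcal H$ is a Borel $E:\mathcal Z\to[0,+\infty)$ with $\mathbb E_P[E]\le1$ for all $P\in\mathcal H$; $\mathcal E_{\mathcal H}$ denotes the set of all e-variables, and an e-class is any subset of $\mathcal E_{\mathcal H}$. $f\succeq f'$ means $f(z)\ge f'(z)$ for all $z$; $f\succ f'$ means $f\succeq f'$ and $f(z)>f'(z)$ for some $z$. An e-variable $E$ is maximal if there is no $E'\in\mathcal E_{\mathcal H}$ with $E'\succ E$. An e-class $\mathcal E$ is majorising if for every $E'\in\mathcal E_{\mathcal H}$ there is $E\in\mathcal E$ with $E\succeq E'$. A majorising e-class is optimal if it is contained in every other majorising e-class. *)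

From HB Require Import structures.
From mathcomp Require Import all_boot all_order all_algebra.
From mathcomp Require Import all_classical all_reals all_analysis.
Set Implicit Arguments. Unset Strict Implicit. Unset Printing Implicit Defensive.
Import Order.TTheory GRing.Theory Num.Theory.
Local Open Scope classical_set_scope.
Local Open Scope ring_scope.

(* The ambient space R^n is [n.-tuple R] with the product (= Borel) sigma-algebra.
   A Borel probability measure on Z is represented by a probability measure on
   R^n with P Z = 1.  A Borel function E : Z -> [0,+oo) is represented by its
   extension by 0 outside Z (so the representation is canonical). *)

Section evars.
Context {R : realType} {n : nat}.
Local Notation T := (n.-tuple R).
Variables (Z : set T) (H : set (probability T R)).

Definition is_hypothesis : Prop := H !=set0 /\ forall P, H P -> P Z = 1%E.

Definition is_evariable (E : T -> R) : Prop :=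
  [/\ measurable_fun Z E,
      (forall x, Z x -> 0 <= E x),
      (forall x, ~ Z x -> E x = 0) &
      (forall P, H P -> (\int[P]_(x in Z) (E x)%:E <= 1)%E)].

Definition evariables : set (T -> R) := [set E | is_evariable E].

Definition fge (f f' : T -> R) : Prop := forall z, Z z -> f' z <= f z.
Definition fgt (f f' : T -> R) : Prop := fge f f' /\ exists z, Z z /\ f' z < f z.

Definition maximal_evariable (E : T -> R) : Prop :=
  is_evariable E /\ ~ (exists E', is_evariable E' /\ fgt E' E).

Definition maximal_evariables : set (T -> R) := [set E | maximal_evariable E].

Definition eclass (C : set (T -> R)) : Prop := C `<=` evariables.

Definition majorising (C : set (T -> R)) : Prop :=
  eclass C /\ forall E', is_evariable E' -> exists2 E, C E & fge E E'.

Definition optimal (C : set (T -> R)) : Prop :=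
  majorising C /\ forall C', majorising C' -> C `<=` C'.

End evars.

From HB Require Import structures.
From mathcomp Require Import all_boot all_order all_algebra.
From mathcomp Require Import all_classical all_reals all_analysis.
Import Order.TTheory GRing.Theory Num.Theory.
Local Open Scope classical_set_scope.
Local Open Scope ring_scope.

Set Implicit Arguments.

(* A maximal e-variable can only be majorised by itself, so every majorising
   class contains all maximal e-variables.  Conversely, if a non-maximal E
   belonged to an optimal class C, replacing E in C by a strictly larger
   e-variable would give a majorising class without E, contradicting the
   minimality of C.  Hence an optimal class is exactly the set of maximal
   e-variables, which yields existence, uniqueness and the characterisation
   at once. *)

Section optimal_eclass.
Context {R : realType} {n : nat} (Z : set (n.-tuple R))
  (H : set (probability (n.-tuple R) R)).

Lemma fge_maximal_evariable_eq (E G : n.-tuple R -> R) :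
  maximal_evariable Z H E -> is_evariable Z H G -> fge Z G E -> G = E.
Proof.
move=> [[_ _ E0 _] Emax] Gev GE; apply/funext => x.
have [Zx|nZx] := pselect (Z x); last by case: Gev => _ _ G0 _; rewrite E0 ?G0.
apply/le_anti; rewrite GE // andbT leNgt; apply/negP => ltEG.
by apply: Emax; exists G; split=> //; split=> //; exists x.
Qed.

Lemma maximal_evariables_sub_majorising C :
  majorising Z H C -> maximal_evariables Z H `<=` C.
Proof.
move=> [CE Cmaj] E Emax; have [G CG GE] := Cmaj E Emax.1.
by rewrite -(fge_maximal_evariable_eq Emax (CE _ CG) GE).
Qed.

Lemma majorising_replace C E E' :
  majorising Z H C -> is_evariable Z H E' -> fge Z E' E ->
  majorising Z H ((C `\ E) `|` [set E']).
Proof.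
move=> [CE Cmaj] E'ev E'E; split=> [F [[/CE //]|->] //|F Fev].
have [G CG GF] := Cmaj F Fev.
have [GE|GE] := pselect (G = E); last by exists G => //; left.
rewrite GE in GF; exists E'; first by right.
by move=> x Zx; apply: le_trans (GF x Zx) (E'E x Zx).
Qed.

Lemma optimal_sub_maximal_evariables C :
  optimal Z H C -> C `<=` maximal_evariables Z H.
Proof.
move=> [Cmaj Cmin] E CE; split; first exact: Cmaj.1.
move=> [E' [E'ev [E'E [z [Zz ltEE'z]]]]].
have := Cmin _ (majorising_replace Cmaj E'ev E'E) E CE.
by case=> [[_ /(_ erefl)] //|EE']; rewrite EE' ltxx in ltEE'z.
Qed.

Lemma optimal_maximal_evariables C :
  optimal Z H C -> C = maximal_evariables Z H.
Proof.
move=> Copt; apply/seteqP; split; first exact: optimal_sub_maximal_evariables.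
exact: maximal_evariables_sub_majorising Copt.1.
Qed.

Lemma majorising_maximal_evariables_optimal :
  majorising Z H (maximal_evariables Z H) ->
  optimal Z H (maximal_evariables Z H).
Proof. by split=> // C; apply: maximal_evariables_sub_majorising. Qed.

End optimal_eclass.

Theorem lemma2 (R : realType) (n : nat) (Z : set (n.-tuple R))
  (mZ : measurable Z) (H : set (probability (n.-tuple R) R))
  (hH : is_hypothesis Z H) :
  ((exists C, optimal Z H C) <->
     (eclass Z H (maximal_evariables Z H) /\
      majorising Z H (maximal_evariables Z H))) /\
  (forall C, optimal Z H C ->
     [/\ (forall C', optimal Z H C' -> C' = C),
         C = maximal_evariables Z H &
         (forall C', majorising Z H C' -> C' `<=` maximal_evariables Z H ->
            C' = C)]).
Proof.
split.
  split=> [[C Copt]|[_ Mmaj]].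
    by rewrite -(optimal_maximal_evariables Copt); split; [exact: Copt.1.1|exact: Copt.1].
  by exists (maximal_evariables Z H); apply: majorising_maximal_evariables_optimal.
move=> C Copt; have CM := optimal_maximal_evariables Copt; split=> //.
  by move=> C' /optimal_maximal_evariables; rewrite CM.
move=> C' C'maj C'M; rewrite CM; apply/seteqP; split=> //.
exact: maximal_evariables_sub_majorising.
Qed.
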